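(* The restrictions of $g$ to $\Omega_2$, $\Omega_3$ and $\Omega_-$ are Lipschitz on bounded sets. More precisely, for every $\bar M>0$ there is a constant $C(\bar M)$ such that $$|g(x)-g(\tilde x)|\le C(\bar M)\big(|Z-\tilde Z|+(|x_7|+|\tilde x_7|)|x_8-\tilde x_8|\big)$$ whenever $x,\tilde x$ both lie in $\Omega_2$, or both lie in $\Omega_3$, or both lie in $\Omega_-$, and all components of $x$ and $\tilde x$ are bounded in absolute value by $\bar M$. Here $Z=(x_4,x_5,x_6,x_7)$, $\tilde Z=(\tilde x_4,\tilde x_5,\tilde x_6,\tilde x_7)$.
   Context: For $x=(x_1,\dots,x_8)\in\mathbb R^8$ let $g_1(x)=|x_5|+2|x_7x_8|+2x_4$, $g_2(x)=x_4+x_6$, $\Omega_1=\{x: g_1(x)\le g_2(x),\ x_5\le0,\ x_7+x_8x_4=0\}$, and $g(x)=g_1(x)$ for $x\in\Omega_1$, $g(x)=g_2(x)$ otherwise. Let $\Omega_2=(\mathbb R^8\setminus\Omega_1)\cap\{x:x_7+x_8x_4=0\}$, $\Omega_3=\{x:x_7+x_8x_4\ne0\}$, $\Omega_-=\{x: x_5\le0,\ x_7+x_8x_4=0\}$. $|\cdot|$ denotes the Euclidean norm. (In the paper's notation $x=(y,\bar U,c,y_\xi,U_\xi,h,\bar r,k)$.) *)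

From Stdlib Require Import Reals.
Open Scope R_scope.

Record R8 := mk8 { x1 : R; x2 : R; x3 : R; x4 : R; x5 : R; x6 : R; x7 : R; x8 : R }.

Definition g1 (x : R8) : R := Rabs (x5 x) + 2 * Rabs (x7 x * x8 x) + 2 * x4 x.
Definition g2 (x : R8) : R := x4 x + x6 x.

Definition Omega1 (x : R8) : Prop :=
  g1 x <= g2 x /\ x5 x <= 0 /\ x7 x + x8 x * x4 x = 0.

(* g = g1 on Omega1, g2 otherwise (decided via the decidable real order/equality). *)
Definition g (x : R8) : R :=
  if Rle_dec (g1 x) (g2 x) then
    if Rle_dec (x5 x) 0 then
      if Req_EM_T (x7 x + x8 x * x4 x) 0 then g1 x else g2 x
    else g2 x
  else g2 x.

Definition Omega2 (x : R8) : Prop := ~ Omega1 x /\ x7 x + x8 x * x4 x = 0.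
Definition Omega3 (x : R8) : Prop := x7 x + x8 x * x4 x <> 0.
Definition Omega_minus (x : R8) : Prop := x5 x <= 0 /\ x7 x + x8 x * x4 x = 0.

Definition bounded_by (M : R) (x : R8) : Prop :=
  Rabs (x1 x) <= M /\ Rabs (x2 x) <= M /\ Rabs (x3 x) <= M /\ Rabs (x4 x) <= M /\
  Rabs (x5 x) <= M /\ Rabs (x6 x) <= M /\ Rabs (x7 x) <= M /\ Rabs (x8 x) <= M.

Definition distZ (x y : R8) : R :=
  sqrt ((x4 x - x4 y)^2 + (x5 x - x5 y)^2 + (x6 x - x6 y)^2 + (x7 x - x7 y)^2).

From Stdlib Require Import Reals Lra.
Open Scope R_scope.

(* On [Omega_minus] the function [g] is [Rmin g1 g2], and on [Omega2] and
   [Omega3] it is [g2]; since [Rmin] is 1-Lipschitz in each argument, it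
   suffices that [g1] and [g2] are Lipschitz for the gauge
   [|Z - Z~| + (|x7| + |x7~|) |x8 - x8~|].  For [g2] this is immediate, and for
   [g1] the only nonlinear term is [x7 x8], whose difference splits as
   [(x7 - x7~) x8 + x7~ (x8 - x8~)]. *)

Definition lip_gauge (x y : R8) : R :=
  distZ x y + (Rabs (x7 x) + Rabs (x7 y)) * Rabs (x8 x - x8 y).

Lemma Rabs_le_sqrt_sum4 a b c d : Rabs a <= sqrt (a ^ 2 + b ^ 2 + c ^ 2 + d ^ 2).
Proof.
  rewrite <- sqrt_Rsqr_abs; apply sqrt_le_1_alt.
  unfold Rsqr; simpl; nra.
Qed.

Lemma distZ_x4 x y : Rabs (x4 x - x4 y) <= distZ x y.
Proof. apply Rabs_le_sqrt_sum4. Qed.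

Lemma distZ_x5 x y : Rabs (x5 x - x5 y) <= distZ x y.
Proof.
  unfold distZ.
  replace ((x4 x - x4 y) ^ 2 + (x5 x - x5 y) ^ 2)
    with ((x5 x - x5 y) ^ 2 + (x4 x - x4 y) ^ 2) by ring.
  apply Rabs_le_sqrt_sum4.
Qed.

Lemma distZ_x6 x y : Rabs (x6 x - x6 y) <= distZ x y.
Proof.
  unfold distZ.
  replace ((x4 x - x4 y) ^ 2 + (x5 x - x5 y) ^ 2 + (x6 x - x6 y) ^ 2)
    with ((x6 x - x6 y) ^ 2 + (x4 x - x4 y) ^ 2 + (x5 x - x5 y) ^ 2) by ring.
  apply Rabs_le_sqrt_sum4.
Qed.

Lemma distZ_x7 x y : Rabs (x7 x - x7 y) <= distZ x y.
Proof.
  unfold distZ.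
  replace ((x4 x - x4 y) ^ 2 + (x5 x - x5 y) ^ 2 + (x6 x - x6 y) ^ 2 + (x7 x - x7 y) ^ 2)
    with ((x7 x - x7 y) ^ 2 + (x4 x - x4 y) ^ 2 + (x5 x - x5 y) ^ 2 + (x6 x - x6 y) ^ 2)
    by ring.
  apply Rabs_le_sqrt_sum4.
Qed.

Lemma x7_x8_gauge_ge0 x y : 0 <= (Rabs (x7 x) + Rabs (x7 y)) * Rabs (x8 x - x8 y).
Proof.
  apply Rmult_le_pos; [| apply Rabs_pos].
  pose proof (Rabs_pos (x7 x)); pose proof (Rabs_pos (x7 y)); lra.
Qed.

Lemma lip_gauge_ge0 x y : 0 <= lip_gauge x y.
Proof.
  pose proof (sqrt_pos ((x4 x - x4 y) ^ 2 + (x5 x - x5 y) ^ 2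
                        + (x6 x - x6 y) ^ 2 + (x7 x - x7 y) ^ 2)).
  pose proof (x7_x8_gauge_ge0 x y).
  unfold lip_gauge, distZ; lra.
Qed.

Lemma Rabs_mult_sub_le a b c d :
  Rabs (a * b - c * d) <= Rabs (a - c) * Rabs b + Rabs c * Rabs (b - d).
Proof.
  replace (a * b - c * d) with ((a - c) * b + c * (b - d)) by ring.
  rewrite <- !Rabs_mult; apply Rabs_triang.
Qed.

Lemma Rabs_Rmin_sub_le a b c d K :
  Rabs (a - c) <= K -> Rabs (b - d) <= K -> Rabs (Rmin a b - Rmin c d) <= K.
Proof.
  unfold Rmin; destruct (Rle_dec a b), (Rle_dec c d);
    unfold Rabs; repeat destruct Rcase_abs; lra.
Qed.

Lemma g2_lipschitz x y : Rabs (g2 x - g2 y) <= 2 * lip_gauge x y.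
Proof.
  unfold g2, lip_gauge.
  pose proof (distZ_x4 x y); pose proof (distZ_x6 x y).
  pose proof (Rabs_triang (x4 x - x4 y) (x6 x - x6 y)).
  pose proof (x7_x8_gauge_ge0 x y).
  replace (x4 x + x6 x - (x4 y + x6 y)) with ((x4 x - x4 y) + (x6 x - x6 y)) by ring.
  lra.
Qed.

Lemma x7_x8_lipschitz M x y : Rabs (x8 x) <= M ->
  Rabs (x7 x * x8 x - x7 y * x8 y)
    <= M * distZ x y + (Rabs (x7 x) + Rabs (x7 y)) * Rabs (x8 x - x8 y).
Proof.
  intros Hx8.
  pose proof (Rabs_mult_sub_le (x7 x) (x8 x) (x7 y) (x8 y)).
  pose proof (distZ_x7 x y).
  pose proof (Rabs_pos (x7 x - x7 y)); pose proof (Rabs_pos (x7 x));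
  pose proof (Rabs_pos (x8 x - x8 y)); pose proof (Rabs_pos (x8 x)).
  nra.
Qed.

Lemma g1_lipschitz M x y : 0 < M -> Rabs (x8 x) <= M ->
  Rabs (g1 x - g1 y) <= (2 * M + 3) * lip_gauge x y.
Proof.
  intros HM Hx8; unfold g1, lip_gauge.
  pose proof (distZ_x4 x y); pose proof (distZ_x5 x y).
  pose proof (x7_x8_lipschitz M x y Hx8).
  pose proof (Rabs_triang_inv2 (x5 x) (x5 y)).
  pose proof (Rabs_triang_inv2 (x7 x * x8 x) (x7 y * x8 y)).
  pose proof (x7_x8_gauge_ge0 x y).
  assert (Htri : forall a b c, Rabs (a + 2 * b + 2 * c) <= Rabs a + 2 * Rabs b + 2 * Rabs c).
  { intros a b c; unfold Rabs; repeat destruct Rcase_abs; lra. }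
  pose proof (Htri (Rabs (x5 x) - Rabs (x5 y)) (Rabs (x7 x * x8 x) - Rabs (x7 y * x8 y))
                   (x4 x - x4 y)).
  replace (Rabs (x5 x) + 2 * Rabs (x7 x * x8 x) + 2 * x4 x
           - (Rabs (x5 y) + 2 * Rabs (x7 y * x8 y) + 2 * x4 y))
    with ((Rabs (x5 x) - Rabs (x5 y)) + 2 * (Rabs (x7 x * x8 x) - Rabs (x7 y * x8 y))
          + 2 * (x4 x - x4 y)) by ring.
  nra.
Qed.

Lemma g_not_Omega1 z : ~ Omega1 z -> g z = g2 z.
Proof.
  intros Hz; unfold g.
  destruct (Rle_dec (g1 z) (g2 z)), (Rle_dec (x5 z) 0),
    (Req_EM_T (x7 z + x8 z * x4 z) 0); auto.
  exfalso; apply Hz; repeat split; auto.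
Qed.

Lemma g_Omega_minus z : Omega_minus z -> g z = Rmin (g1 z) (g2 z).
Proof.
  intros [H5 H78]; unfold g, Rmin.
  destruct (Rle_dec (g1 z) (g2 z)), (Rle_dec (x5 z) 0),
    (Req_EM_T (x7 z + x8 z * x4 z) 0); tauto.
Qed.

Theorem lemma4p2 :
  forall M : R, 0 < M ->
  exists C : R,
    forall x y : R8,
      ((Omega2 x /\ Omega2 y) \/ (Omega3 x /\ Omega3 y) \/
       (Omega_minus x /\ Omega_minus y)) ->
      bounded_by M x -> bounded_by M y ->
      Rabs (g x - g y) <=
        C * (distZ x y + (Rabs (x7 x) + Rabs (x7 y)) * Rabs (x8 x - x8 y)).
Proof.
  intros M HM; exists (2 * M + 3); intros x y Hxy Bx _.
  fold (lip_gauge x y).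
  assert (Hx8 : Rabs (x8 x) <= M) by apply Bx.
  assert (G1 := g1_lipschitz M x y HM Hx8).
  assert (G2 : Rabs (g2 x - g2 y) <= (2 * M + 3) * lip_gauge x y).
  { pose proof (g2_lipschitz x y); pose proof (lip_gauge_ge0 x y); nra. }
  assert (g_eq_g2 : forall z, Omega2 z \/ Omega3 z -> g z = g2 z).
  { intros z [[Hn _] | H3]; apply g_not_Omega1; [exact Hn | intros [_ [_ H]]; auto]. }
  destruct Hxy as [[Hx Hy] | [[Hx Hy] | [Hx Hy]]].
  - rewrite !g_eq_g2 by auto; exact G2.
  - rewrite !g_eq_g2 by auto; exact G2.
  - rewrite !g_Omega_minus by auto; apply Rabs_Rmin_sub_le; assumption.
Qed.
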